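(* Let $K$ be a Markov kernel on $\mathbb{R}$ such that $Kf\in\mathcal{C}_0(\mathbb{R})$ for every $f\in\mathcal{C}_0(\mathbb{R})$ and $Kf$ is bounded non-decreasing for every bounded non-decreasing Borel $f:\mathbb{R}\to\mathbb{R}$. Then for all $u,v\in\mathbb{R}$ and every $f\in\mathcal{C}_{u,v}(\mathbb{R})$, one has $Kf\in\mathcal{C}_{u,v}(\mathbb{R})$.
   Context: $\mathcal{C}_0(\mathbb{R})$ is the space of continuous functions vanishing at $\pm\infty$. For $u,v\in\mathbb{R}$, $\mathcal{C}_{u,v}(\mathbb{R})$ is the set of continuous $f:\mathbb{R}\to\mathbb{R}$ with $\lim_{x\to-\infty}f(x)=u$ and $\lim_{x\to+\infty}f(x)=v$. $Kf(x)=\int f(y)K(x,dy)$. *)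

From HB Require Import structures.
From mathcomp Require Import all_boot all_order all_algebra.
From mathcomp Require Import all_classical all_reals all_analysis.
Set Implicit Arguments. Unset Strict Implicit. Unset Printing Implicit Defensive.
Import Order.TTheory GRing.Theory Num.Theory.
Import numFieldNormedType.Exports.
Local Open Scope classical_set_scope.
Local Open Scope ring_scope.

(* R is equipped with its Borel sigma-algebra
   (canonical measurableType structure on a realType). *)

Definition kapply (R : realType) (K : R.-pker R ~> R) (f : R -> R) : R -> R :=
  fun x => fine (\int[K x]_y (f y)%:E)%E.

Definition C_lim (R : realType) (u v : R) (f : R -> R) : Prop :=
  continuous f /\ f x @[x --> -oo] --> u /\ f x @[x --> +oo] --> v.

Definition C_zero (R : realType) (f : R -> R) : Prop := C_lim 0 0 f.

Definition bounded_fun_R (R : realType) (f : R -> R) : Prop :=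
  exists M : R, forall x, `|f x| <= M.

Definition nondecreasing_R (R : realType) (f : R -> R) : Prop :=
  forall x y : R, x <= y -> f x <= f y.

From HB Require Import structures.
From mathcomp Require Import all_boot all_order all_algebra.
From mathcomp Require Import all_classical all_reals all_analysis.
From mathcomp Require Import measurable_realfun ring lra.
Import Order.TTheory GRing.Theory Num.Theory.
Import numFieldNormedType.Exports.
Local Open Scope classical_set_scope.
Local Open Scope ring_scope.
Set Implicit Arguments. Unset Strict Implicit. Unset Printing Implicit Defensive.

(* Let g_n be the ramp rising from 0 to 1 on [n, n+1].  Then
   h_n := f - u - (v - u) g_n lies in C_0, so Kf = K h_n + u + (v - u) K g_n with
   K h_n in C_0.  The correction K g_n is nonnegative, nondecreasing, and tends to 0
   pointwise as n -> oo by dominated convergence, so it is uniformly small on every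
   half-line (-oo, x]; this gives continuity of Kf and the limit u at -oo.  A ramp
   descending from 1 at -oo to 0 gives the limit v at +oo in the same way. *)

Section affine_approximation.
Context {R : realType} {T : Type} (F : set_system T) {FF : Filter F}.

Lemma cvg_affine_approx (phi : T -> R) (A B : nat -> T -> R) (a b l : R)
    (c t : nat -> R) :
  (forall n y, phi y = A n y + (a + b * B n y)) ->
  (forall n, A n @ F --> l - (a + b * c n)) ->
  t @ \oo --> 0 ->
  (forall n, \forall y \near F, `|B n y - c n| <= t n) ->
  phi @ F --> l.
Proof.
move=> phiE A_cvg t_cvg0 B_near; apply/cvgrPdist_le => e e0.
have e2 : 0 < e / 2 by rewrite divr_gt0.
have bt_cvg0 : b * t n @[n --> \oo] --> 0.
  by rewrite -(mulr0 b); exact: cvgM (cvg_cst b) t_cvg0.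
have [N _ /(_ N (leqnn N))] := (cvgrPdist_le _ _).1 bt_cvg0 _ e2.
rewrite sub0r normrN normrM => btN.
near=> y.
have A_close : `|l - (a + b * c N) - A N y| <= e / 2.
  by near: y; exact: (cvgrPdist_le _ _).1 (A_cvg N) _ e2.
have B_close : `|B N y - c N| <= t N by near: y; exact: B_near.
have -> : l - phi y = (l - (a + b * c N) - A N y) - b * (B N y - c N).
  by rewrite (phiE N y); ring.
apply: le_trans (ler_normB _ _) _; rewrite (splitr e) normrM.
apply: lerD => //; apply: le_trans btN.
by apply: ler_wpM2l => //; exact: le_trans B_close (ler_norm _).
Unshelve. all: end_near.
Qed.

End affine_approximation.

Section C_lim.
Context {R : realType}.
Implicit Types (f g : R -> R) (u v a b : R).

Lemma C_lim_eventually f u v : continuous f ->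
  (\forall y \near -oo, f y = u) -> (\forall y \near +oo, f y = v) -> C_lim u v f.
Proof. by move=> cf fu fv; split=> //; split; exact: cvg_near_cst. Qed.

Lemma C_limB f g u v u' v' : C_lim u v f -> C_lim u' v' g ->
  C_lim (u - u') (v - v') (fun y => f y - g y).
Proof.
move=> [cf [fu fv]] [cg [gu gv]]; split; [|split]; last 2 first.
- exact: cvgB.
- exact: cvgB.
by move=> x; apply: cvgB; [exact: cf|exact: cg].
Qed.

Lemma C_lim_affine f u v a b : C_lim u v f ->
  C_lim (a + b * u) (a + b * v) (fun y => a + b * f y).
Proof.
move=> [cf [fu fv]]; split; [|split]; last 2 first.
- by apply: cvgD; [exact: cvg_cst|exact: cvgM (cvg_cst b) fu].
- by apply: cvgD; [exact: cvg_cst|exact: cvgM (cvg_cst b) fv].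
by move=> x; apply: cvgD; [exact: cvg_cst|exact: cvgM (cvg_cst b) (cf x)].
Qed.

Lemma C_lim_bounded f u v : C_lim u v f -> bounded_fun_R f.
Proof.
move=> [cf [fu fv]].
have [M fM] : exists M, forall y, M < y -> `|f y| <= `|v| + 1.
  have [M [_ fvM]] := (cvgrPdist_le _ _).1 fv 1 ltr01.
  exists M => y /fvM; have := ler_normB v (v - f y); rewrite opprB addrC subrK; lra.
have [m fm] : exists m, forall y, y < m -> `|f y| <= `|u| + 1.
  have [m [_ fum]] := (cvgrPdist_le _ _).1 fu 1 ltr01.
  exists m => y /fum; have := ler_normB u (u - f y); rewrite opprB addrC subrK; lra.
have mM : m <= Num.max m M by rewrite le_max lexx.
have [c _ fc] := @EVT_max _ (fun y => `|f y|) _ _ mM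
  (continuous_subspaceT (fun x => cvg_norm (cf x))).
exists (`|u| + 1 + (`|v| + 1) + `|f c|) => y.
have := normr_ge0 u; have := normr_ge0 v; have := normr_ge0 (f c).
have [/fM|yM] := ltrP M y; first lra.
have [/fm|my] := ltrP y m; first lra.
have : `|f y| <= `|f c| by apply: fc; rewrite in_itv /= my le_max yM orbT.
lra.
Qed.

End C_lim.

Section ramp.
Context {R : realType}.
Implicit Types (s t y : R) (n : nat).

Definition ramp t : R := Num.min (Num.max t 0) 1.

Lemma ramp_ge0 t : 0 <= ramp t.
Proof. by rewrite le_min le_max lexx orbT ler01. Qed.

Lemma ramp_le1 t : ramp t <= 1.
Proof. by rewrite ge_min lexx orbT. Qed.

Lemma ramp_le : {homo ramp : s t / s <= t}.
Proof. by move=> s t st; rewrite le_min2 // le_max2. Qed.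

Lemma ramp_eq0 t : t <= 0 -> ramp t = 0.
Proof. by move=> t0; rewrite /ramp max_r // min_l // ler01. Qed.

Lemma ramp_eq1 t : 1 <= t -> ramp t = 1.
Proof. by move=> t1; rewrite /ramp max_l ?min_r // (le_trans ler01). Qed.

Lemma continuous_ramp : continuous ramp.
Proof.
move=> t; apply: (@continuous_min _ _ (fun t => Num.max t 0) (cst 1)).
  by apply: (@continuous_max _ _ id (cst 0)) => //; exact: cvg_cst.
exact: cvg_cst.
Qed.

Definition ramp_up n y := ramp (y - n%:R).
Definition ramp_down n y := ramp (- y - n%:R).

Lemma C_lim_ramp_up n : C_lim 0 1 (ramp_up n).
Proof.
apply: C_lim_eventually.
- move=> y; apply: (continuous_comp (f := fun y => y - n%:R)).
    by apply: cvgB => //; exact: cvg_cst.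
  exact: continuous_ramp.
- near=> y; apply: ramp_eq0; rewrite subr_le0; apply: le_trans (ler0n R n).
  by near: y; exact: nbhs_ninfty_le.
- near=> y; apply: ramp_eq1; rewrite lerBrDr.
  by near: y; exact: nbhs_pinfty_ge.
Unshelve. all: end_near.
Qed.

Lemma C_lim_ramp_down n : C_lim 1 0 (ramp_down n).
Proof.
apply: C_lim_eventually.
- move=> y; apply: (continuous_comp (f := fun y => - y - n%:R)).
    by apply: cvgB; [exact: cvgN|exact: cvg_cst].
  exact: continuous_ramp.
- near=> y; apply: ramp_eq1; rewrite lerBrDr lerNr.
  by near: y; exact: nbhs_ninfty_le.
- near=> y; apply: ramp_eq0; rewrite subr_le0; apply: le_trans (ler0n R n).
  by rewrite lerNl oppr0; near: y; exact: nbhs_pinfty_ge.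
Unshelve. all: end_near.
Qed.

Lemma ramp_up_cvg0 y : ramp_up n y @[n --> \oo] --> 0.
Proof.
apply: cvg_near_cst; near=> n; apply: ramp_eq0; rewrite subr_le0.
by near: n; exact: nbhs_infty_ger.
Unshelve. all: end_near.
Qed.

Lemma ramp_down_cvg0 y : ramp_down n y @[n --> \oo] --> 0.
Proof.
apply: cvg_near_cst; near=> n; apply: ramp_eq0; rewrite subr_le0.
by near: n; exact: nbhs_infty_ger.
Unshelve. all: end_near.
Qed.

Lemma ramp_up_nondecreasing n : nondecreasing_R (ramp_up n).
Proof. by move=> x y xy; apply: ramp_le; rewrite lerB. Qed.

Lemma ramp_down_nonincreasing n s t : s <= t -> ramp_down n t <= ramp_down n s.
Proof. by move=> st; apply: ramp_le; rewrite lerB // lerN2. Qed.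

End ramp.

Section bounded_measurable.
Context {R : realType}.
Implicit Types (f g : R -> R) (a b : R).

Definition bounded_measurable f := measurable_fun setT f /\ bounded_fun_R f.

Lemma bounded_measurable_cst a : bounded_measurable (fun _ => a).
Proof. by split; [exact: measurable_cst|exists `|a|]. Qed.

Lemma bounded_measurableD f g : bounded_measurable f -> bounded_measurable g ->
  bounded_measurable (fun y => f y + g y).
Proof.
move=> [mf [M fM]] [mg [N gN]]; split; first exact: measurable_funD.
by exists (M + N) => y; apply: le_trans (ler_normD _ _) _; exact: lerD.
Qed.

Lemma bounded_measurableB f g : bounded_measurable f -> bounded_measurable g ->
  bounded_measurable (fun y => f y - g y).
Proof.
move=> [mf [M fM]] [mg [N gN]]; split; first exact: measurable_funB.
by exists (M + N) => y; apply: le_trans (ler_normB _ _) _; exact: lerD.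
Qed.

Lemma bounded_measurableZ a f : bounded_measurable f ->
  bounded_measurable (fun y => a * f y).
Proof.
move=> [mf [M fM]]; split; first exact: measurable_funM.
by exists (`|a| * M) => y; rewrite normrM ler_wpM2l.
Qed.

Lemma C_lim_bounded_measurable f u v : C_lim u v f -> bounded_measurable f.
Proof.
move=> fC; split; last exact: C_lim_bounded fC.
exact: continuous_measurable_fun fC.1.
Qed.

End bounded_measurable.

Section kernel_apply.
Context {R : realType} (K : R.-pker R ~> R).
Implicit Types (f g : R -> R) (a b x : R).

Lemma kernel_integrable f x : bounded_measurable f ->
  (K x).-integrable setT (EFin \o f).
Proof.
move=> [mf [M fM]]; apply/integrableP; split; first exact/measurable_EFinP.
apply: le_lt_trans.
  apply: (integral_le_bound M%:E) => //.
  - by apply: measurableT_comp => //; exact/measurable_EFinP.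
  - by rewrite lee_fin (le_trans _ (fM 0)).
  - by apply: aeW => y _; rewrite /= lee_fin fM.
by rewrite prob_kernel mule1 ltry.
Qed.

Lemma kapplyD f g x : bounded_measurable f -> bounded_measurable g ->
  kapply K (fun y => f y + g y) x = kapply K f x + kapply K g x.
Proof. by move=> bf bg; apply: RintegralD => //; exact: kernel_integrable. Qed.

Lemma kapplyZ a f x : bounded_measurable f ->
  kapply K (fun y => a * f y) x = a * kapply K f x.
Proof. by move=> bf; apply: RintegralZl => //; exact: kernel_integrable. Qed.

Lemma kapply_cst a x : kapply K (fun _ => a) x = a.
Proof. by rewrite /kapply -/(Rintegral _ _ _) Rintegral_cst// prob_kernel mulr1. Qed.

Lemma kapply_ge0 f x : (forall y, 0 <= f y) -> 0 <= kapply K f x.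
Proof. by move=> f0; apply: fine_ge0; apply: integral_ge0 => y _; rewrite lee_fin. Qed.

Lemma kapply_decomp f g a b x : bounded_measurable f -> bounded_measurable g ->
  kapply K f x = kapply K (fun y => f y - (a + b * g y)) x + (a + b * kapply K g x).
Proof.
move=> bf bg; have bZg := bounded_measurableZ b bg.
have baff := bounded_measurableD (bounded_measurable_cst a) bZg.
have bh := bounded_measurableB bf baff.
transitivity (kapply K (fun y => (f y - (a + b * g y)) + (a + b * g y)) x).
  by congr kapply; apply/funext => y; rewrite subrK.
rewrite (kapplyD x bh baff) (kapplyD x (bounded_measurable_cst a) bZg).
by rewrite kapply_cst kapplyZ.
Qed.

Lemma kapply_cvg0 (g : nat -> R -> R) x :
  (forall n, measurable_fun setT (g n)) -> (forall n y, `|g n y| <= 1) ->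
  (forall y, g n y @[n --> \oo] --> 0) -> kapply K (g n) x @[n --> \oo] --> 0.
Proof.
move=> mg g1 g_cvg0; apply: fine_cvg.
have := @dominated_cvg _ _ _ (K x) _ measurableT (fun n => EFin \o g n) (cst 0%E)
  (EFin \o cst 1) _ _ _ (kernel_integrable x (bounded_measurable_cst 1)).
rewrite integral0; apply.
- by move=> n; exact/measurable_EFinP.
- by move=> y _; apply: cvg_EFin => //; [exact: nearW|exact: g_cvg0].
- by [].
- by move=> n y _; rewrite /= lee_fin g1.
Qed.

End kernel_apply.

Section kernel_apply_ramp.
Context {R : realType} (K : R.-pker R ~> R).

Lemma kapply_ramp_up_cvg0 (x : R) : kapply K (ramp_up n) x @[n --> \oo] --> 0.
Proof.
apply: kapply_cvg0 => [n|n y|y]; last exact: ramp_up_cvg0.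
  exact: (C_lim_bounded_measurable (C_lim_ramp_up n)).1.
by rewrite ger0_norm ?ramp_ge0 ?ramp_le1.
Qed.

Lemma kapply_ramp_down_cvg0 (x : R) : kapply K (ramp_down n) x @[n --> \oo] --> 0.
Proof.
apply: kapply_cvg0 => [n|n y|y]; last exact: ramp_down_cvg0.
  exact: (C_lim_bounded_measurable (C_lim_ramp_down n)).1.
by rewrite ger0_norm ?ramp_ge0 ?ramp_le1.
Qed.

End kernel_apply_ramp.

Section monotone_kernel.
Context {R : realType} (K : R.-pker R ~> R).
Hypothesis hmono : forall f : R -> R, measurable_fun setT f -> bounded_fun_R f ->
  nondecreasing_R f -> bounded_fun_R (kapply K f) /\ nondecreasing_R (kapply K f).

Lemma kapply_nondecreasing (g : R -> R) : bounded_measurable g ->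
  nondecreasing_R g -> nondecreasing_R (kapply K g).
Proof. by move=> [mg bg] g_nd; have [] := hmono mg bg g_nd. Qed.

Lemma kapply_nonincreasing (g : R -> R) : bounded_measurable g ->
  (forall x y, x <= y -> g y <= g x) ->
  forall x y, x <= y -> kapply K g y <= kapply K g x.
Proof.
move=> bg g_ni x y xy.
have bNg := bounded_measurableZ (-1) bg.
have Ng_nd : nondecreasing_R (fun y => -1 * g y).
  by move=> s t st; rewrite !mulN1r lerN2; exact: g_ni.
have := kapply_nondecreasing bNg Ng_nd xy.
by rewrite !kapplyZ // !mulN1r lerN2.
Qed.

End monotone_kernel.

Section proposition.
Context {R : realType} (K : R.-pker R ~> R).
Hypothesis hC0 : forall f : R -> R, C_zero f -> C_zero (kapply K f).
Hypothesis hmono : forall f : R -> R, measurable_fun setT f -> bounded_fun_R f ->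
  nondecreasing_R f -> bounded_fun_R (kapply K f) /\ nondecreasing_R (kapply K f).
Variables (u v : R) (f : R -> R).
Hypothesis fC : C_lim u v f.

Let bf := C_lim_bounded_measurable fC.
Let b_up n := C_lim_bounded_measurable (@C_lim_ramp_up R n).
Let b_down n := C_lim_bounded_measurable (@C_lim_ramp_down R n).

Lemma C_zero_kapply_residual_up n :
  C_zero (kapply K (fun y => f y - (u + (v - u) * ramp_up n y))).
Proof.
apply: hC0; have := C_limB fC (C_lim_affine u (v - u) (C_lim_ramp_up n)).
by rewrite mulr0 addr0 mulr1 subrr [u + _]addrC subrK subrr.
Qed.

Lemma C_zero_kapply_residual_down n :
  C_zero (kapply K (fun y => f y - (v + (u - v) * ramp_down n y))).
Proof.
apply: hC0; have := C_limB fC (C_lim_affine v (u - v) (C_lim_ramp_down n)).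
by rewrite mulr0 addr0 mulr1 subrr [v + _]addrC subrK subrr.
Qed.

Lemma continuous_kapply : continuous (kapply K f).
Proof.
move=> x; apply: (cvg_affine_approx (a := u) (b := v - u)
  (B := fun n => kapply K (ramp_up n)) (c := fun n => kapply K (ramp_up n) x)
  (t := fun n => kapply K (ramp_up n) (x + 1))) => [n y|n||n].
- exact: kapply_decomp bf (b_up n).
- rewrite [in X in _ --> X](kapply_decomp _ u (v - u) x bf (b_up n)) addrK.
  exact: (C_zero_kapply_residual_up n).1.
- exact: kapply_ramp_up_cvg0.
have x_le : x <= x + 1 by rewrite lerDl.
near=> y.
have y_le : y <= x + 1 by apply/ltW; near: y; apply: lt_nbhsl; rewrite ltrDl.
have := kapply_ge0 K (f := ramp_up n) x (fun=> ramp_ge0 _).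
have := kapply_ge0 K (f := ramp_up n) y (fun=> ramp_ge0 _).
have := kapply_nondecreasing hmono (b_up n) (@ramp_up_nondecreasing _ n) y_le.
have := kapply_nondecreasing hmono (b_up n) (@ramp_up_nondecreasing _ n) x_le.
rewrite ler_norml; lra.
Unshelve. all: end_near.
Qed.

Lemma kapply_cvg_ninfty : kapply K f x @[x --> -oo] --> u.
Proof.
apply: (cvg_affine_approx (a := u) (b := v - u)
  (B := fun n => kapply K (ramp_up n)) (c := fun=> 0)
  (t := fun n => kapply K (ramp_up n) 0)) => [n y|n||n].
- exact: kapply_decomp bf (b_up n).
- rewrite mulr0 addr0 subrr; exact: (C_zero_kapply_residual_up n).2.1.
- exact: kapply_ramp_up_cvg0.
near=> y; have y_le : y <= 0 by near: y; exact: nbhs_ninfty_le.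
rewrite subr0 ger0_norm; last exact: kapply_ge0 (fun=> ramp_ge0 _).
by have := kapply_nondecreasing hmono (b_up n) (@ramp_up_nondecreasing _ n) y_le.
Unshelve. all: end_near.
Qed.

Lemma kapply_cvg_pinfty : kapply K f x @[x --> +oo] --> v.
Proof.
apply: (cvg_affine_approx (a := v) (b := u - v)
  (B := fun n => kapply K (ramp_down n)) (c := fun=> 0)
  (t := fun n => kapply K (ramp_down n) 0)) => [n y|n||n].
- exact: kapply_decomp bf (b_down n).
- rewrite mulr0 addr0 subrr; exact: (C_zero_kapply_residual_down n).2.2.
- exact: kapply_ramp_down_cvg0.
near=> y; have y_ge : 0 <= y by near: y; exact: nbhs_pinfty_ge.
rewrite subr0 ger0_norm; last exact: kapply_ge0 (fun=> ramp_ge0 _).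
by have := kapply_nonincreasing hmono (b_down n) (@ramp_down_nonincreasing _ n) y_ge.
Unshelve. all: end_near.
Qed.

Lemma C_lim_kapply : C_lim u v (kapply K f).
Proof.
split; first exact: continuous_kapply.
by split; [apply: kapply_cvg_ninfty|apply: kapply_cvg_pinfty].
Qed.

End proposition.

Theorem proposition2p6 (R : realType) (K : R.-pker R ~> R)
  (hC0 : forall f : R -> R, C_zero f -> C_zero (kapply K f))
  (hmono : forall f : R -> R, measurable_fun setT f -> bounded_fun_R f ->
      nondecreasing_R f ->
      bounded_fun_R (kapply K f) /\ nondecreasing_R (kapply K f)) :
  forall (u v : R) (f : R -> R), C_lim u v f -> C_lim u v (kapply K f).
Proof.
move=> u v f; exact: (C_lim_kapply hC0 hmono).
Qed.
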